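(* Let $k\geq1$. The variety $\mathbf N_k$ is finitely generated (generated by a single finite algebra) if and only if $k\leq 3$.
   Context: $S_7$ is the ai-semiring on $\{\infty,a,1\}$ with $x+x=x$, $x+y=\infty$ for $x\neq y$, and commutative multiplication with $\infty$ a zero, $a\cdot a=\infty$, $a\cdot 1=a$, $1\cdot1=1$. $\mathbf N$ is the subvariety of $\mathsf V(S_7)$ defined by the identity $x^2y\approx x^2$, and for $k\geq1$, $\mathbf N_k$ is the subvariety of $\mathbf N$ defined by the identity $x_1\cdots x_k\approx y_1\cdots y_k$ (with $x_1,\dots,x_k,y_1,\dots,y_k$ distinct variables). *)

From mathcomp Require Import all_boot.

Set Implicit Arguments.
Unset Strict Implicit.
Unset Printing Implicit Defensive.

Record alg := Alg {
  car :> Type;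
  aadd : car -> car -> car;
  amul : car -> car -> car
}.

Inductive term : Type :=
| Var : nat -> term
| Add : term -> term -> term
| Mul : term -> term -> term.

Fixpoint eval (A : alg) (v : nat -> A) (t : term) : A :=
  match t with
  | Var n => v n
  | Add s u => @aadd A (eval v s) (eval v u)
  | Mul s u => @amul A (eval v s) (eval v u)
  end.

Definition sat (A : alg) (s t : term) : Prop :=
  forall v : nat -> A, eval v s = eval v t.

Inductive s7 := S7inf | S7a | S7one.

Definition s7_eqb (x y : s7) : bool :=
  match x, y with
  | S7inf, S7inf | S7a, S7a | S7one, S7one => true
  | _, _ => false
  end.

Definition s7_add (x y : s7) : s7 := if s7_eqb x y then x else S7inf.

Definition s7_mul (x y : s7) : s7 :=
  match x, y with
  | S7one, S7one => S7one
  | S7a, S7one | S7one, S7a => S7a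
  | _, _ => S7inf
  end.

Definition S7 : alg := Alg s7_add s7_mul.

(* Membership in V(S_7): satisfying every identity of S_7 (Birkhoff). *)
Definition in_VS7 (A : alg) : Prop :=
  forall s t : term, sat S7 s t -> sat A s t.

Definition in_N (A : alg) : Prop :=
  in_VS7 A /\
  sat A (Mul (Mul (Var 0) (Var 0)) (Var 1)) (Mul (Var 0) (Var 0)).

(* prodv s n = x_s x_{s+1} ... x_{s+n}  (product of n+1 distinct variables) *)
Fixpoint prodv (s n : nat) : term :=
  match n with
  | 0 => Var s
  | n'.+1 => Mul (prodv s n') (Var (s + n'.+1))
  end.

(* N_k (k >= 1): subvariety of N defined by x_1...x_k ~ y_1...y_k,
   with x_i := Var (i-1) and y_i := Var (k+i-1), all distinct. *)
Definition in_Nk (k : nat) (A : alg) : Prop :=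
  in_N A /\ sat A (prodv 0 k.-1) (prodv k k.-1).

Definition in_V (B A : alg) : Prop :=
  forall s t : term, sat B s t -> sat A s t.

Definition fin_generated (K : alg -> Prop) : Prop :=
  exists (T : finType) (ad mu : T -> T -> T),
    forall A : alg, K A <-> in_V (@Alg T ad mu) A.

From HB Require Import structures.
From mathcomp Require Import all_boot all_algebra zify.
From Stdlib Require Import FunctionalExtensionality Classical.
Import GRing.Theory.

(* The algebras used are weighted-subset algebras: for weights on a finite set [C] and a
   bound [K], the subsets of weight in [1..K] together with [oo], multiplied by disjoint
   union and added idempotently.  They are quotients of subalgebras of [S_7^C], and they
   lie in [N_k] as soon as [K < k].
   For [k <= 3], a term of [N_k] either equals zero or its identities are those of [S_7],
   which are governed by the transversals of its monomials (the letter sets meeting each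
   monomial exactly once); the weighted-subset algebras on one and two points detect both
   facts, so they generate [N_2] and [N_3].
   For [k >= 4], a finite algebra [B] of [N_k] satisfies [sum_(i < j < m) x_i x_j y_ij = 0]
   as soon as [m > |B|], by pigeonhole, while a weighted-subset algebra on [m + 1] points,
   one of weight [3 - m] and the others of weight [1], refutes it and still lies in [N_k]. *)

Set Implicit Arguments.
Unset Strict Implicit.
Unset Printing Implicit Defensive.

Lemma s7_eqP : Equality.axiom s7_eqb.
Proof. by case; case; constructor. Qed.
HB.instance Definition _ := hasDecEq.Build s7 s7_eqP.

Lemma s7_add_infl z : s7_add S7inf z = S7inf. Proof. by case: z. Qed.
Lemma s7_add_infr z : s7_add z S7inf = S7inf. Proof. by case: z. Qed.
Lemma s7_mul_infl z : s7_mul S7inf z = S7inf. Proof. by case: z. Qed.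
Lemma s7_mul_infr z : s7_mul z S7inf = S7inf. Proof. by case: z. Qed.

Section SubpowerImage.

Variables (B A : alg) (I : Type) (R : (I -> B) -> Prop).
Variables (pi : (I -> B) -> A) (sec : A -> I -> B).

Hypothesis R_sec : forall x, R (sec x).
Hypothesis pi_sec : forall x, pi (sec x) = x.
Hypothesis R_add : forall u v, R u -> R v -> R (fun i => aadd (u i) (v i)).
Hypothesis R_mul : forall u v, R u -> R v -> R (fun i => amul (u i) (v i)).
Hypothesis pi_add : forall u v, R u -> R v ->
  pi (fun i => aadd (u i) (v i)) = aadd (pi u) (pi v).
Hypothesis pi_mul : forall u v, R u -> R v ->
  pi (fun i => amul (u i) (v i)) = amul (pi u) (pi v).

Lemma eval_subpower_image (w : nat -> A) t :
  eval w t = pi (fun i => eval (fun n => sec (w n) i) t).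
Proof.
have liftP : R (fun i => eval (fun n => sec (w n) i) t) /\
             pi (fun i => eval (fun n => sec (w n) i) t) = eval w t.
  elim: t => [n | s1 [R1 E1] s2 [R2 E2] | s1 [R1 E1] s2 [R2 E2]] /=.
  - by split; [apply: R_sec | apply: pi_sec].
  - by split; [apply: R_add | rewrite pi_add // E1 E2].
  - by split; [apply: R_mul | rewrite pi_mul // E1 E2].
by rewrite liftP.2.
Qed.

End SubpowerImage.

(** * Identities of S_7 *)

Fixpoint monomials (t : term) : seq (seq nat) :=
  match t with
  | Var n => [:: [:: n]]
  | Add s u => monomials s ++ monomials u
  | Mul s u => [seq m ++ m' | m <- monomials s, m' <- monomials u]
  end.

Definition s7_prod (v : nat -> s7) (m : seq nat) : s7 :=
  foldr (fun x y => s7_mul (v x) y) S7one m.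

(* [s7_add] has no neutral element: the value on [[::]] is junk, only nonempty sums occur. *)
Fixpoint s7_sum (l : seq s7) : s7 :=
  match l with
  | [::] => S7one
  | [:: y] => y
  | y :: l' => s7_add y (s7_sum l')
  end.

Lemma s7_sum_cons y l : l != [::] -> s7_sum (y :: l) = s7_add y (s7_sum l).
Proof. by case: l. Qed.

Lemma s7_sum_cat l1 l2 : l1 != [::] -> l2 != [::] ->
  s7_sum (l1 ++ l2) = s7_add (s7_sum l1) (s7_sum l2).
Proof.
elim: l1 => [|y [|z l1] IH] // _ l2_neq0; first by rewrite cat1s s7_sum_cons.
rewrite cat_cons !(s7_sum_cons y) // IH //.
by case: y; case: (s7_sum (z :: l1)); case: (s7_sum l2).
Qed.

Lemma s7_sum_map_mul x l : l != [::] -> s7_sum (map (s7_mul x) l) = s7_mul x (s7_sum l).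
Proof.
elim: l => [|y [|z l] IH] // _.
rewrite map_cons !(s7_sum_cons _ (l := _ :: _)) // IH //.
by clear IH; case: x; case: y; case: (s7_sum (z :: l)).
Qed.

Lemma s7_sum_allpairs_mul l1 l2 : l1 != [::] -> l2 != [::] ->
  s7_sum [seq s7_mul x y | x <- l1, y <- l2] = s7_mul (s7_sum l1) (s7_sum l2).
Proof.
elim: l1 => [|y [|z l1] IH] // _ l2_neq0; rewrite allpairs_cons.
  by rewrite cats0 s7_sum_map_mul.
rewrite s7_sum_cat ?s7_sum_map_mul ?IH ?(s7_sum_cons y (l := z :: l1)) //.
- by clear IH; case: y; case: (s7_sum (z :: l1)); case: (s7_sum l2).
- by rewrite -size_eq0 size_map size_eq0.
- by rewrite -size_eq0 size_allpairs /= muln_eq0 /= size_eq0.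
Qed.

Lemma s7_prod_cat v m m' : s7_prod v (m ++ m') = s7_mul (s7_prod v m) (s7_prod v m').
Proof.
elim: m => [|x m IH] /=; first by case: (s7_prod v m').
by rewrite IH; case: (v x); case: (s7_prod v m); case: (s7_prod v m').
Qed.

Lemma monomials_neq0 t : monomials t != [::].
Proof.
elim: t => [n | s IHs u IHu | s IHs u IHu] //=; first by case: (monomials s) IHs.
by rewrite -size_eq0 size_allpairs muln_eq0 !size_eq0 negb_or IHs IHu.
Qed.

Lemma map_monos_neq0 (f : seq nat -> s7) t : map f (monomials t) != [::].
Proof. by rewrite -size_eq0 size_map size_eq0 monomials_neq0. Qed.

Lemma monomials_word_neq0 t m : m \in monomials t -> m != [::].
Proof.
elim: t m => [n | s IHs u IHu | s IHs u IHu] m /=.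
- by rewrite inE => /eqP ->.
- by rewrite mem_cat => /orP [/IHs | /IHu].
by case/allpairsP => -[m1 m2] /= [/IHs + _ ->]; case: m1.
Qed.

Lemma eval_S7_monomials v t : eval (v : nat -> S7) t = s7_sum (map (s7_prod v) (monomials t)).
Proof.
elim: t => [n | s IHs u IHu | s IHs u IHu] /=.
- by case: (v n).
- by rewrite map_cat s7_sum_cat ?IHs ?IHu ?map_monos_neq0.
rewrite map_allpairs IHs IHu -s7_sum_allpairs_mul ?map_monos_neq0 //.
rewrite allpairs_mapl allpairs_mapr; congr s7_sum.
by apply: eq_allpairs => x y; rewrite s7_prod_cat.
Qed.

Lemma s7_sum_eqa l : l != [::] -> (s7_sum l == S7a) = all (pred1 S7a) l.
Proof.
elim: l => [|y [|z l] IH] // _; first by rewrite /= andbT.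
rewrite s7_sum_cons // (_ : all _ _ = (y == S7a) && all (pred1 S7a) (z :: l)) // -IH //.
by clear IH; case: y; case: s7_sum.
Qed.

Lemma s7_sum_eq1 l : l != [::] -> (s7_sum l == S7one) = all (pred1 S7one) l.
Proof.
elim: l => [|y [|z l] IH] // _; first by rewrite /= andbT.
rewrite s7_sum_cons // (_ : all _ _ = (y == S7one) && all (pred1 S7one) (z :: l)) // -IH //.
by clear IH; case: y; case: s7_sum.
Qed.

Lemma s7_sum_inf l : S7inf \in l -> s7_sum l = S7inf.
Proof.
elim: l => [|y [|z l] IH] //; first by rewrite inE => /eqP ->.
rewrite s7_sum_cons // in_cons => /orP [/eqP <- | /IH ->].
  exact: s7_add_infl.
exact: s7_add_infr.
Qed.

Lemma s7_sum_addr_mem l y : y \in l -> s7_add (s7_sum l) y = s7_sum l.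
Proof.
elim: l => [|z [|w l] IH] //; first by rewrite inE => /eqP ->; case: z.
rewrite s7_sum_cons // in_cons => /orP [/eqP -> | /IH yl].
  by clear IH; case: z; case: s7_sum.
by rewrite -[in RHS]yl; clear IH yl; case: z; case: s7_sum; case: y.
Qed.

Lemma s7_sum_mem l y : s7_sum l != S7inf -> y \in l -> y = s7_sum l.
Proof. by move=> + /s7_sum_addr_mem; case: s7_sum; case: y. Qed.

Lemma s7_prod_inf v m x : x \in m -> v x = S7inf -> s7_prod v m = S7inf.
Proof.
elim: m => [|y m IH] //=; rewrite in_cons => /orP [/eqP <- -> | xm vx].
  exact: s7_mul_infl.
by rewrite IH //; apply: s7_mul_infr.
Qed.

Lemma s7_prod_eq1 v m : (s7_prod v m == S7one) = all (fun x => v x == S7one) m.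
Proof. by elim: m => [|y m IH] //=; rewrite -IH; case: (v y); case: s7_prod. Qed.

Lemma eq_in_s7_prod v v' m : {in m, v =1 v'} -> s7_prod v m = s7_prod v' m.
Proof.
elim: m => [|y m IH] //= vv'; rewrite vv' ?mem_head // IH // => x xm.
by apply: vv'; rewrite in_cons xm orbT.
Qed.

Definition chi (A : pred nat) : nat -> s7 := fun x => if A x then S7a else S7one.

Lemma s7_prod_chi A m :
  s7_prod (chi A) m = match count A m with 0 => S7one | 1 => S7a | _ => S7inf end.
Proof.
by elim: m => [|y m IH] //=; rewrite IH /chi; case: (A y); case: (count A m) => [|[|c]].
Qed.

Definition vars (t : term) : seq nat := flatten (monomials t).

Lemma varsP x t : reflect (exists2 m, m \in monomials t & x \in m) (x \in vars t).
Proof. exact: flattenP. Qed.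

Lemma vars_witness t : {x | x \in vars t}.
Proof.
rewrite /vars; case: (monomials t) (monomials_neq0 t) (@monomials_word_neq0 t) => [|[|x m] l] // _.
  by move/(_ _ (mem_head _ _)).
by exists x; rewrite /= inE eqxx.
Qed.

Lemma eval_S7_inf v t x : x \in vars t -> v x = S7inf -> eval (v : nat -> S7) t = S7inf.
Proof.
move=> /varsP [m mt xm] vx; rewrite eval_S7_monomials; apply: s7_sum_inf.
by apply/mapP; exists m => //; rewrite (s7_prod_inf xm vx).
Qed.

Lemma eq_in_eval_S7 v v' t : {in vars t, v =1 v'} ->
  eval (v : nat -> S7) t = eval (v' : nat -> S7) t.
Proof.
move=> vv'; rewrite !eval_S7_monomials; congr s7_sum; apply/eq_in_map => m mt.
by apply: eq_in_s7_prod => x xm; apply: vv'; apply/varsP; exists m.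
Qed.

Lemma eval_S7_eq1P v t :
  reflect {in vars t, forall x, v x = S7one} (eval (v : nat -> S7) t == S7one).
Proof.
rewrite eval_S7_monomials s7_sum_eq1 ?map_monos_neq0 // all_map.
apply: (iffP allP) => [all1 x /varsP [m mt xm] | all1 m mt].
  by have := all1 m mt; rewrite /= s7_prod_eq1 => /allP /(_ x xm) /eqP.
by rewrite /= s7_prod_eq1; apply/allP => x xm; apply/eqP/all1/varsP; exists m.
Qed.

Definition transversal (A : pred nat) (t : term) : bool :=
  all (fun m => count A m == 1) (monomials t).

Lemma eval_chi_eqa A t : (eval (chi A : nat -> S7) t == S7a) = transversal A t.
Proof.
rewrite eval_S7_monomials s7_sum_eqa ?map_monos_neq0 // all_map.
by apply: eq_all => m /=; rewrite s7_prod_chi; case: (count A m) => [|[|c]].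
Qed.

Lemma eq_in_transversal A A' t : {in vars t, A =1 A'} -> transversal A t = transversal A' t.
Proof.
move=> AA'; rewrite -!eval_chi_eqa (@eq_in_eval_S7 (chi A) (chi A')) // => x /AA'.
by rewrite /chi => ->.
Qed.

Lemma eval_S7_chi v t : eval (v : nat -> S7) t != S7inf ->
  eval (v : nat -> S7) t = eval (chi (fun x => v x == S7a) : nat -> S7) t.
Proof.
move=> tfin; apply: eq_in_eval_S7 => x xt; rewrite /chi.
by case vx: (v x) => //; rewrite (eval_S7_inf xt vx) in tfin.
Qed.

Lemma sat_S7_transversal s t : vars s =i vars t ->
  (forall A, transversal A s = transversal A t) -> sat S7 s t.
Proof.
move=> st sAt v.
have [/hasP [x xs /eqP vx] | /hasPn sfin] := boolP (has (fun x => v x == S7inf) (vars s)).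
  by rewrite (eval_S7_inf xs vx) (eval_S7_inf _ vx) // -st.
pose A x := v x == S7a.
have chiE u : {subset vars u <= vars s} -> eval (v : nat -> S7) u = eval (chi A : nat -> S7) u.
  move=> us; apply: eq_in_eval_S7 => x /us xs; rewrite /chi /A.
  by case: (v x) (sfin x xs).
rewrite !chiE // => [|x]; last by rewrite st.
have eq1 : (eval (chi A : nat -> S7) s == S7one) = (eval (chi A : nat -> S7) t == S7one).
  by apply/eval_S7_eq1P/eval_S7_eq1P => ones x; [rewrite -st | rewrite st]; apply: ones.
have eqa : (eval (chi A : nat -> S7) s == S7a) = (eval (chi A : nat -> S7) t == S7a).
  by rewrite !eval_chi_eqa sAt.
by move: eq1 eqa; case: (eval _ s); case: (eval _ t).
Qed.

Definition flip (A : pred nat) (x : nat) : pred nat :=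
  fun y => if y == x then ~~ A x else A y.

Lemma count_flip A x m : uniq m -> x \in m -> count (flip A x) m + A x = count A m + ~~ A x.
Proof.
move=> um xm; rewrite !(permP (perm_to_rem xm)) /= /flip eqxx.
rewrite (@eq_in_count _ _ A) => [|y yrem]; first by case: (A x) => /=; lia.
by case: eqP => // yx; rewrite yx mem_rem_uniqF in yrem.
Qed.

Lemma transversal_flip A x t : all uniq (monomials t) -> x \in vars t ->
  transversal A t -> ~~ transversal (flip A x) t.
Proof.
move=> /allP tu /varsP [m mt xm] /allP At; apply/allP => /(_ m mt) /eqP Fm.
by move: (count_flip A (tu m mt) xm) (At m mt); rewrite Fm; case: (A x) => /=; lia.
Qed.

Lemma sat_S7_of_transversal s t : all uniq (monomials s) -> all uniq (monomials t) ->
  (exists A, transversal A s) -> (forall A, transversal A s = transversal A t) -> sat S7 s t.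
Proof.
have vars_sub u u' A : all uniq (monomials u) -> transversal A u ->
    (forall A, transversal A u = transversal A u') -> {subset vars u <= vars u'}.
  move=> uu Au uu' x xu; apply/negPn/negP => xu'; case/negP: (transversal_flip uu xu Au).
  rewrite uu' (@eq_in_transversal _ A) -?uu' // => y yu'; rewrite /flip.
  by case: eqP => // yx; move: yu'; rewrite yx (negbTE xu').
move=> su tu [A As] st; apply: sat_S7_transversal => // x.
apply/idP/idP; first exact: (vars_sub _ _ A).
by apply: (vars_sub _ _ A) => //; rewrite -st.
Qed.

Fixpoint word_term (m : seq nat) : term :=
  match m with
  | [::] => Var 0
  | [:: x] => Var x
  | x :: m' => Mul (Var x) (word_term m')
  end.

Lemma eval_word_term v m : m != [::] -> eval (v : nat -> S7) (word_term m) = s7_prod v m.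
Proof.
elim: m => [|x [|y m] IH] // _; first by rewrite /=; case: (v x).
by rewrite [LHS]/= IH.
Qed.

Lemma sat_S7_add_mono t m : m \in monomials t -> sat S7 t (Add t (word_term m)).
Proof.
move=> mt v /=; rewrite eval_word_term ?(monomials_word_neq0 mt) //.
by rewrite eval_S7_monomials s7_sum_addr_mem // map_f.
Qed.

Lemma eval_S7_foldr_Add (T : eqType) (f : T -> term) (v : nat -> S7) d l : eval v d = S7a ->
  (forall p, p \in l -> eval v (f p) = S7a) -> eval v (foldr Add d (map f l)) = S7a.
Proof.
move=> da; elim: l => [|q l IH] //= la.
by rewrite la ?mem_head // IH // => p pl; apply: la; rewrite in_cons pl orbT.
Qed.

(** * Weighted-subset algebras *)

Section WeightedSubsets.

Variables (C : finType) (wt : C -> int) (K : int).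

Local Open Scope ring_scope.

Definition wsum (W : {set C}) : int := \sum_(c in W) wt c.

Definition admissible (W : {set C}) : bool := (0 < wsum W) && (wsum W <= K).

Definition wsub_valid (o : option {set C}) : bool :=
  if o is Some W then admissible W else true.

Definition wsub := {o : option {set C} | wsub_valid o}.

Definition wsub_inf : wsub := exist _ None isT.

Definition wsub_of (o : option {set C}) : wsub := insubd wsub_inf o.

Definition wsub_add (x y : wsub) : wsub := if val x == val y then x else wsub_inf.

Definition wsub_mul (x y : wsub) : wsub :=
  wsub_of (match val x, val y with
           | Some W, Some V => if [disjoint W & V] then Some (W :|: V) else None
           | _, _ => None
           end).

Definition WSub : alg := Alg wsub_add wsub_mul.

Implicit Types (W V : {set C}) (x y : wsub) (u v : C -> s7).

Lemma wsumU W V : [disjoint W & V] -> wsum (W :|: V) = wsum W + wsum V.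
Proof. by move=> WV; rewrite /wsum -bigU //; apply: eq_bigl => c; rewrite !inE. Qed.

Lemma wsumD1 W c : c \in W -> wsum W = wsum (W :\ c) + wt c.
Proof.
move=> cW; rewrite /wsum (bigD1 c) //= addrC; congr (_ + _).
by apply: eq_bigl => d; rewrite !inE andbC.
Qed.

Lemma wsum0 : wsum set0 = 0.
Proof. by rewrite /wsum big_set0. Qed.

Lemma val_wsub_of o : val (wsub_of o) = if wsub_valid o then o else None.
Proof. by rewrite /wsub_of val_insubd. Qed.

Lemma wsub_of_None : wsub_of None = wsub_inf.
Proof. by apply: val_inj; rewrite val_wsub_of. Qed.

Lemma wsub_add_infl y : wsub_add wsub_inf y = wsub_inf.
Proof. by rewrite /wsub_add; case: ifP. Qed.

Lemma wsub_add_infr x : wsub_add x wsub_inf = wsub_inf.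
Proof. by rewrite /wsub_add; case: eqP => // xinf; apply: val_inj. Qed.

Lemma wsub_mul_infl y : wsub_mul wsub_inf y = wsub_inf.
Proof. by apply: val_inj; rewrite val_wsub_of. Qed.

Lemma wsub_mul_infr x : wsub_mul x wsub_inf = wsub_inf.
Proof. by apply: val_inj; rewrite val_wsub_of; case: (val x). Qed.

Lemma wsub_mul_of W V : 0 < wsum W -> 0 < wsum V ->
  wsub_mul (wsub_of (Some W)) (wsub_of (Some V)) =
  wsub_of (if [disjoint W & V] then Some (W :|: V) else None).
Proof.
move=> W0 V0; rewrite /wsub_mul !val_wsub_of /= /admissible W0 V0 /=.
have [WK|KW] := boolP (wsum W <= K); have [VK|KV] := boolP (wsum V <= K) => //.
all: case: ifP => // WV; apply: val_inj; rewrite !val_wsub_of /= /admissible.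
all: by rewrite wsumU //; case: ifP => //; lia.
Qed.

Lemma wsub_sqr x : wsub_mul x x = wsub_inf.
Proof.
case: x => [[W|] /= Wadm]; last by apply: val_inj; rewrite val_wsub_of.
rewrite /wsub_mul /=; case: ifP => [WW|_]; last by apply: val_inj; rewrite val_wsub_of.
have W0 : W = set0 by rewrite -[W]setIid; apply: disjoint_setI0.
by move: Wadm; rewrite /admissible W0 wsum0.
Qed.

Definition ind (W : {set C}) : C -> s7 := fun c => if c \in W then S7a else S7one.

Definition wsub_vec (x : wsub) : C -> s7 :=
  if val x is Some W then ind W else fun=> S7inf.

Definition has_inf u : bool := [exists c, u c == S7inf].

Definition aset u : {set C} := [set c | u c == S7a].

Definition wsub_proj u : wsub := wsub_of (if has_inf u then None else Some (aset u)).

Definition wsub_dom u : bool := has_inf u || (0 < wsum (aset u)).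

Lemma s7vecP (u : C -> s7) : {c | u c = S7inf} + {W | u = ind W}.
Proof.
case: (pickP (fun c => u c == S7inf)) => [c /eqP uc | noinf]; first by left; exists c.
right; exists [set c | u c == S7a]; apply: functional_extensionality => c.
by rewrite /ind inE; move: (noinf c); case: (u c).
Qed.

Lemma wsub_proj_inf u c : u c = S7inf -> wsub_proj u = wsub_inf.
Proof.
by move=> uc; rewrite /wsub_proj ifT ?wsub_of_None //; apply/existsP; exists c; rewrite uc.
Qed.

Lemma has_ind W : has_inf (ind W) = false.
Proof. by apply/existsP => -[c]; rewrite /ind; case: (c \in W). Qed.

Lemma aset_ind W : aset (ind W) = W.
Proof. by apply/setP => c; rewrite inE /ind; case: (c \in W). Qed.

Lemma wsub_proj_ind W : wsub_proj (ind W) = wsub_of (Some W).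
Proof. by rewrite /wsub_proj has_ind aset_ind. Qed.

Lemma wsub_vecK x : wsub_proj (wsub_vec x) = x.
Proof.
case: x => [[W|] Wadm]; rewrite /wsub_vec /=.
  by rewrite wsub_proj_ind; apply: val_inj; rewrite val_wsub_of Wadm.
rewrite /wsub_proj; case: ifP => _; first by rewrite wsub_of_None; apply: val_inj.
apply: val_inj; rewrite val_wsub_of /= /admissible.
by rewrite (_ : aset _ = set0) ?wsum0 //; apply/setP => c; rewrite !inE.
Qed.

Lemma has_infP u c : u c = S7inf -> has_inf u.
Proof. by move=> uc; apply/existsP; exists c; rewrite uc. Qed.

Lemma wsub_dom_ind W : wsub_dom (ind W) = (0 < wsum W).
Proof. by rewrite /wsub_dom has_ind aset_ind. Qed.

Lemma wsub_add_of W V : W != V -> wsub_add (wsub_of (Some W)) (wsub_of (Some V)) = wsub_inf.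
Proof.
move=> WV; rewrite /wsub_add !val_wsub_of /=.
case AW: (admissible W); case: (admissible V) => //=.
  by case: eqP => // -[WV']; rewrite WV' eqxx in WV.
by apply: val_inj; rewrite val_wsub_of /= AW.
Qed.

Lemma ind_add_neq W V : W != V -> {c | s7_add (ind W c) (ind V c) = S7inf}.
Proof.
move=> WV; case: (pickP (fun c => (c \in W) != (c \in V))) => [c WVc | same].
  by exists c; move: WVc; rewrite /ind; case: (c \in W); case: (c \in V).
by case/eqP: WV; apply/setP => c; move: (same c) => /negbFE /eqP.
Qed.

Lemma ind_mul_disjoint W V : [disjoint W & V] ->
  (fun c => s7_mul (ind W c) (ind V c)) = ind (W :|: V).
Proof.
move=> /disjoint_setI0 /setP WV; apply: functional_extensionality => c.
by move: (WV c); rewrite /ind !inE; case: (c \in W); case: (c \in V).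
Qed.

Lemma ind_mul_meet W V : ~~ [disjoint W & V] -> {c | s7_mul (ind W c) (ind V c) = S7inf}.
Proof.
rewrite -setI_eq0 => /set0Pn WV; case: (pickP (mem (W :&: V))) => [c | none].
  by rewrite /= inE => /andP [Wc Vc]; exists c; rewrite /ind Wc Vc.
by exfalso; case: WV => c; move: (none c) => /= ->.
Qed.

Lemma s7vec2P u v :
  {c | u c = S7inf} + {c | v c = S7inf} + {W | u = ind W} * {V | v = ind V}.
Proof.
case: (s7vecP u) => [uc | Wu]; first by left; left.
case: (s7vecP v) => [vc | Vv]; first by left; right.
by right.
Qed.

Notation pw op u v := (fun c => op (u c) (v c)).

Lemma wsub_dom_add u v : wsub_dom u -> wsub_dom v -> wsub_dom (pw s7_add u v).
Proof.
case: (s7vec2P u v) => [[[c uc] | [c vc]] _ _ | [[W ->] [V ->]]].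
- by rewrite /wsub_dom (@has_infP _ c) //= uc s7_add_infl.
- by rewrite /wsub_dom (@has_infP _ c) //= vc s7_add_infr.
rewrite !wsub_dom_ind; have [<- W0 _ | /ind_add_neq [c WVc] _ _] := eqVneq W V.
  rewrite (_ : pw _ _ _ = ind W) ?wsub_dom_ind //.
  by apply: functional_extensionality => c; case: (ind W c).
by rewrite /wsub_dom (@has_infP _ c).
Qed.

Lemma wsub_proj_add u v :
  wsub_proj (pw s7_add u v) = wsub_add (wsub_proj u) (wsub_proj v).
Proof.
case: (s7vec2P u v) => [[[c uc] | [c vc]] | [[W ->] [V ->]]].
- by rewrite (wsub_proj_inf uc) wsub_add_infl (@wsub_proj_inf _ c) //= uc s7_add_infl.
- by rewrite (wsub_proj_inf vc) wsub_add_infr (@wsub_proj_inf _ c) //= vc s7_add_infr.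
rewrite !wsub_proj_ind; have [<- | /[dup] WV /ind_add_neq [c WVc]] := eqVneq W V.
  rewrite /wsub_add eqxx (_ : pw _ _ _ = ind W) ?wsub_proj_ind //.
  by apply: functional_extensionality => c; case: (ind W c).
by rewrite (wsub_proj_inf WVc) wsub_add_of.
Qed.

Lemma wsub_dom_mul u v : wsub_dom u -> wsub_dom v -> wsub_dom (pw s7_mul u v).
Proof.
case: (s7vec2P u v) => [[[c uc] | [c vc]] _ _ | [[W ->] [V ->]]].
- by rewrite /wsub_dom (@has_infP _ c) //= uc s7_mul_infl.
- by rewrite /wsub_dom (@has_infP _ c) //= vc s7_mul_infr.
rewrite !wsub_dom_ind => W0 V0; have [WV | /ind_mul_meet [c WVc]] := boolP [disjoint W & V].
  by rewrite ind_mul_disjoint // wsub_dom_ind wsumU //; lia.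
by rewrite /wsub_dom (@has_infP _ c).
Qed.

Lemma wsub_proj_mul u v : wsub_dom u -> wsub_dom v ->
  wsub_proj (pw s7_mul u v) = wsub_mul (wsub_proj u) (wsub_proj v).
Proof.
case: (s7vec2P u v) => [[[c uc] | [c vc]] _ _ | [[W ->] [V ->]]].
- by rewrite (wsub_proj_inf uc) wsub_mul_infl (@wsub_proj_inf _ c) //= uc s7_mul_infl.
- by rewrite (wsub_proj_inf vc) wsub_mul_infr (@wsub_proj_inf _ c) //= vc s7_mul_infr.
rewrite !wsub_dom_ind !wsub_proj_ind => W0 V0; rewrite wsub_mul_of //.
have [WV | /ind_mul_meet [c WVc]] := boolP [disjoint W & V].
  by rewrite ind_mul_disjoint // wsub_proj_ind.
by rewrite (wsub_proj_inf WVc) wsub_of_None.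
Qed.

(* A point of [C] is needed only to give the constant vector [oo] an [oo] coordinate. *)
Variable c0 : C.

Lemma wsub_dom_vec x : wsub_dom (wsub_vec x).
Proof.
case: x => [[W|] Wadm]; rewrite /wsub_vec /=; last by rewrite /wsub_dom (@has_infP _ c0).
by rewrite wsub_dom_ind; case/andP: Wadm.
Qed.

(* [WSub] is the image under [wsub_proj] of the subalgebra [wsub_dom] of [S_7^C]: a vector
   with an [oo] coordinate goes to [oo], the indicator vector of a set of positive weight
   goes to that set, or to [oo] when the weight exceeds [K]. *)
Lemma eval_WSub (w : nat -> WSub) t :
  eval w t = wsub_proj (fun c => eval (fun n => wsub_vec (w n) c : S7) t).
Proof.
apply: (@eval_subpower_image S7 WSub C wsub_dom wsub_proj wsub_vec).
- by move=> x; apply: wsub_dom_vec.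
- by move=> x; apply: wsub_vecK.
- by move=> u v; apply: wsub_dom_add.
- by move=> u v; apply: wsub_dom_mul.
- by move=> u v _ _; apply: wsub_proj_add.
- by move=> u v; apply: wsub_proj_mul.
Qed.

Lemma eval_WSub_inf (w : nat -> WSub) t (n : nat) :
  n \in vars t -> w n = wsub_inf -> eval w t = wsub_inf.
Proof.
move=> nt wn; rewrite eval_WSub (@wsub_proj_inf _ c0) //.
by apply: (eval_S7_inf nt); rewrite wn.
Qed.

Lemma wsub_vec_of W : admissible W -> wsub_vec (wsub_of (Some W)) = ind W.
Proof. by move=> Wadm; rewrite /wsub_vec val_wsub_of /= Wadm. Qed.

Lemma eval_WSub_sets (S : nat -> {set C}) t : (forall n, admissible (S n)) ->
  eval (fun n => wsub_of (Some (S n)) : WSub) t =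
  wsub_proj (fun c => eval (chi (fun n => c \in S n) : nat -> S7) t).
Proof.
move=> Sadm; rewrite eval_WSub; congr wsub_proj; apply: functional_extensionality => c.
by apply: eq_in_eval_S7 => n _; rewrite wsub_vec_of.
Qed.

Lemma wsub_proj_full u : admissible setT ->
  (wsub_proj u = wsub_of (Some setT)) <-> (forall c, u c = S7a).
Proof.
move=> Tadm; split => [| ua]; last first.
  rewrite (_ : u = ind setT) ?wsub_proj_ind //.
  by apply: functional_extensionality => c; rewrite ua /ind inE.
move/(congr1 val); rewrite !val_wsub_of /= Tadm; case: ifP => // _.
case: ifP => // _ [] /setP ua c; move: (ua c); rewrite !inE.
by move=> /eqP.
Qed.

Lemma WSub_in_VS7 : in_VS7 WSub.
Proof.
move=> s t st w; rewrite !eval_WSub; congr wsub_proj.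
by apply: functional_extensionality => c; apply: st.
Qed.

Lemma WSub_in_N : in_N WSub.
Proof. by split; [exact: WSub_in_VS7 | move=> w /=; rewrite wsub_sqr wsub_mul_infl]. Qed.

Lemma wsum_prodv (w : nat -> WSub) s j W :
  val (eval w (prodv s j)) = Some W -> j.+1%:Z <= wsum W.
Proof.
elim: j W => [|j IH] W /=.
  by case: (w s) => -[W' /andP [W'0 _] [<-] | //]; lia.
rewrite /wsub_mul val_wsub_of.
case: (val (eval w (prodv s j))) IH => [W1 /(_ W1 erefl) W1j | _]; last by case: wsub_valid.
case: (w (s + j.+1)) => -[V /andP [V0 _] | //] /=.
have [W1V | _] := boolP [disjoint W1 & V] => //=.
by case: ifP => // _ [<-]; rewrite wsumU //; lia.
Qed.

Lemma WSub_in_Nk k : (0 < k)%N -> K < k%:Z -> in_Nk k WSub.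
Proof.
move=> k0 Kk; split; first exact: WSub_in_N.
suff prod_inf w s : eval w (prodv s k.-1) = wsub_inf :> WSub by move=> w; rewrite !prod_inf.
apply: val_inj; case E: (val _) (valP (eval w (prodv s k.-1))) => [W|] //=.
by move: (wsum_prodv E); rewrite prednK // /admissible; lia.
Qed.

End WeightedSubsets.

(** * Algebras in N *)

Ltac sat_S7 := let v := fresh "v" in
  move=> v /=; case: (v 0); case: (v 1); case: (v 2); reflexivity.

Section NLaws.

Variable A : alg.
Hypothesis AN : in_N A.

Notation "x + y" := (aadd x y).
Notation "x * y" := (amul x y).

Implicit Types x y z : A.

Lemma N_addC x y : x + y = y + x.
Proof.
have addC : sat S7 (Add (Var 0) (Var 1)) (Add (Var 1) (Var 0)) by sat_S7.
exact: (AN.1 _ _ addC (nth x [:: x; y])).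
Qed.

Lemma N_mulC x y : x * y = y * x.
Proof.
have mulC : sat S7 (Mul (Var 0) (Var 1)) (Mul (Var 1) (Var 0)) by sat_S7.
exact: (AN.1 _ _ mulC (nth x [:: x; y])).
Qed.

Lemma N_mulA x y z : x * (y * z) = x * y * z.
Proof.
have mulA : sat S7 (Mul (Var 0) (Mul (Var 1) (Var 2))) (Mul (Mul (Var 0) (Var 1)) (Var 2)).
  by sat_S7.
exact: (AN.1 _ _ mulA (nth x [:: x; y; z])).
Qed.

Lemma N_sqr_mull x y : x * x * y = x * x.
Proof. exact: (AN.2 (nth x [:: x; y])). Qed.

Lemma N_sqr_mulr x y : y * (x * x) = x * x.
Proof. by rewrite N_mulC N_sqr_mull. Qed.

Lemma N_sqr_eq x y : x * x = y * y.
Proof. by rewrite -(N_sqr_mull x (y * y)) N_sqr_mulr. Qed.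

Lemma N_sqr_addl x y : x * x + y = x * x.
Proof.
have absorb (p q : A) : p + q * q = p + q + q * q.
  have I1 : sat S7 (Add (Var 0) (Mul (Var 1) (Var 1)))
                   (Add (Add (Var 0) (Var 1)) (Mul (Var 1) (Var 1))) by sat_S7.
  exact: (AN.1 _ _ I1 (nth p [:: p; q])).
have addI : sat S7 (Add (Var 0) (Var 0)) (Var 0) by sat_S7.
have swap (p q : A) : x * x + p = x * x + q.
  have Ep : x * x + p = p + q + x * x by rewrite N_addC (N_sqr_eq x q) absorb.
  have Eq : x * x + q = q + p + x * x by rewrite N_addC (N_sqr_eq x p) absorb.
  by rewrite Ep Eq (N_addC p).
by rewrite (swap y (x * x)); apply: (AN.1 _ _ addI (nth (x * x) [::])).
Qed.

Lemma N_sqr_addr x y : y + x * x = x * x.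
Proof. by rewrite N_addC N_sqr_addl. Qed.

End NLaws.

(* In an algebra of [N] all squares coincide; their common value is its zero. *)
Lemma N_eval_zero (A : alg) (v : nat -> A) t u (x : A) : in_N A ->
  sat S7 t (Add t u) -> eval v u = amul x x -> eval v t = amul x x.
Proof. by move=> AN tu ux; rewrite (AN.1 _ _ tu v) /= ux N_sqr_addr. Qed.

Lemma N_eval_foldr_Add (A : alg) (T : eqType) (f : T -> term) (v : nat -> A) d l p (x : A) :
  in_N A -> p \in l -> eval v (f p) = amul x x -> eval v (foldr Add d (map f l)) = amul x x.
Proof.
move=> AN + px; elim: l => [|q l IH] //=; rewrite in_cons => /orP [/eqP <- | /IH ->].
  by rewrite px (N_sqr_addl AN).
exact: (N_sqr_addr AN).
Qed.

Lemma in_Nk_in_V k (B A : alg) : in_Nk k B -> in_V B A -> in_Nk k A.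
Proof.
move=> [[BV BN] Bk] BA; split; first split.
- by move=> s t /BV; apply: BA.
- exact: BA.
- exact: BA.
Qed.

Lemma fin_generated_Nk k (T : finType) (ad mu : T -> T -> T) :
    in_Nk k (Alg ad mu) -> (forall A, in_Nk k A -> in_V (Alg ad mu) A) ->
  fin_generated (in_Nk k).
Proof. by move=> Bk BNk; exists T, ad, mu => A; split; [apply: BNk | apply: in_Nk_in_V]. Qed.

(* [B] generates [N_k] if it separates the terms that [N_k] identifies with zero from
   the others, and identifies two other terms only when [S_7] does. *)
Lemma in_V_of_null_split k (B A : alg) (null : term -> Prop) :
    (forall (X : alg) (v : nat -> X) t, in_Nk k X -> null t -> eval v t = amul (v 0) (v 0)) ->
    in_Nk k B ->
    (forall t, ~ null t -> exists w : nat -> B, eval w t <> amul (w 0) (w 0)) ->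
    (forall s t, ~ null s -> ~ null t -> sat B s t -> sat S7 s t) ->
  in_Nk k A -> in_V B A.
Proof.
move=> Nnull Bk Bsep BS7 Ak s t st.
have separated u u' : sat B u u' -> null u -> ~ null u' -> False.
  move=> uu' nu /Bsep [w]; rewrite -(uu' w); apply; exact: Nnull.
have [ns | ns] := classic (null s); have [nt | nt] := classic (null t).
- by move=> v; rewrite !(Nnull _ _ _ Ak).
- by case: (separated s t).
- by case: (separated t s) => // w; rewrite st.
- by apply: Ak.1.1; apply: BS7.
Qed.

(** * Generators of N_1, N_2 and N_3 *)

Definition B1 : alg := @Alg unit (fun _ _ => tt) (fun _ _ => tt).

Lemma B1_in_N1 : in_Nk 1 B1.
Proof.
have B1_sat s t : sat B1 s t by move=> v; case: (eval v s); case: (eval v t).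
by split; [split; [move=> s t _ |] |]; apply: B1_sat.
Qed.

Lemma B1_generates_N1 (X : alg) : in_Nk 1 X -> in_V B1 X.
Proof. by move=> XN s t _ v; apply: (XN.2 (nth (eval v s) [:: eval v s; eval v t])). Qed.

Definition null2 (t : term) : bool := ~~ all (fun m => size m == 1) (monomials t).

Lemma N2_eval_null (A : alg) (v : nat -> A) t : in_Nk 2 A -> null2 t ->
  eval v t = amul (v 0) (v 0).
Proof.
move=> AN /allPn [m mt m1]; apply: (N_eval_zero AN.1 (sat_S7_add_mono mt)).
case: m mt m1 (monomials_word_neq0 mt) => [|x [|y m]] //= _ _ _.
exact: (AN.2 (nth (v 0) [:: v x; eval v (word_term (y :: m)); v 0; v 0])).
Qed.

Definition B2 : alg := WSub (fun _ : 'I_1 => 1%R) 1.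

Definition full2 : B2 := wsub_of _ _ (Some setT).

Definition letters2 (A : pred nat) (x : nat) : B2 := if A x then full2 else wsub_inf _ _.

Lemma admissible_setT2 : admissible (fun _ : 'I_1 => 1%R) 1 setT.
Proof. by rewrite /admissible /wsum sumr_const cardsT card_ord. Qed.

Lemma full2_neq_inf : full2 <> wsub_inf _ _.
Proof. by move/(congr1 val); rewrite val_wsub_of /= admissible_setT2. Qed.

Lemma transversal_letters A t : ~~ null2 t -> transversal A t = all A (vars t).
Proof.
move/negPn/allP => size1.
have letter m : m \in monomials t -> {y | m = [:: y]}.
  by move/size1; case: m => [|y []] // _; exists y.
apply/allP/allP => [At x /varsP [m mt] | Avars m mt]; case: (letter m mt) => y my.
  by move: (At m mt); rewrite my inE /= => + /eqP ->; case: (A y).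
rewrite my /= Avars //; apply/varsP; exists m; by rewrite // my mem_head.
Qed.

Lemma eval_B2 A t : ~~ null2 t ->
  eval (letters2 A) t = if all A (vars t) then full2 else wsub_inf _ _.
Proof.
move=> t1; have [/allP Avars | /allPn [n nt An]] := boolP (all A (vars t)); last first.
  by apply: (eval_WSub_inf ord0 nt); rewrite /letters2 (negbTE An).
rewrite (eval_WSub ord0) /full2; apply/(wsub_proj_full _ admissible_setT2).
move=> c; apply/eqP; rewrite (@eq_in_eval_S7 _ (chi predT)) ?eval_chi_eqa.
  by rewrite transversal_letters //; apply/allP.
move=> n /Avars An; rewrite /letters2 An /= /full2 /wsub_vec val_wsub_of /= admissible_setT2.
by rewrite /ind inE.
Qed.

Lemma B2_in_N2 : in_Nk 2 B2.
Proof. exact: (WSub_in_Nk _ ord0). Qed.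

Lemma B2_generates_N2 (X : alg) : in_Nk 2 X -> in_V B2 X.
Proof.
apply: (in_V_of_null_split (null := null2)) => [Y v t | | t /negP t1 | s t /negP s1 /negP t1 st].
- exact: N2_eval_null.
- exact: B2_in_N2.
- by exists (letters2 predT); rewrite eval_B2 // all_predT [amul _ _]wsub_sqr; apply: full2_neq_inf.
have vars_eq A : all A (vars s) = all A (vars t).
  move: (st (letters2 A)); rewrite !eval_B2 //.
  by case: (all A _); case: (all A _) => // E; [case: full2_neq_inf | case: full2_neq_inf].
apply: sat_S7_transversal => [x | A]; last by rewrite !transversal_letters.
apply/idP/idP => xv; [move: (vars_eq (mem (vars t))) | move: (vars_eq (mem (vars s)))].
- by rewrite [in RHS](introT allP) // => /allP; apply.
- by rewrite [in LHS](introT allP) // => /esym /allP; apply.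
Qed.

Definition short (m : seq nat) : bool := (size m <= 2) && uniq m.

Definition letter_and_product (t : term) : Prop :=
  exists u y, [:: u] \in monomials t /\ ([:: u; y] \in monomials t \/ [:: y; u] \in monomials t).

(* The terms that [N_3] identifies with zero. *)
Definition null3 (t : term) : Prop :=
  ~~ all short (monomials t) \/ (forall A, ~~ transversal A t) \/ letter_and_product t.

Lemma N3_mul3 (X : alg) (x y z d : X) : in_Nk 3 X -> amul x (amul y z) = amul d d.
Proof.
move=> XN; rewrite (N_mulA XN.1).
by have /= -> := XN.2 (nth d [:: x; y; z; d; d; d]); apply: (N_sqr_mull XN.1).
Qed.

Lemma N3_word_null (X : alg) (v : nat -> X) m : in_Nk 3 X -> m != [::] -> ~~ short m ->
  eval v (word_term m) = amul (v 0) (v 0).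
Proof.
move=> XN; case: m => [|x [|y [|z m]]] //= _.
  by rewrite /short /= andbT inE negbK => /eqP <-; apply: (N_sqr_eq XN.1).
by move=> _; apply: N3_mul3.
Qed.

Lemma N3_eval_null (X : alg) (v : nat -> X) t : in_Nk 3 X -> null3 t ->
  eval v t = amul (v 0) (v 0).
Proof.
move=> XN [/allPn [m mt nsm] | [noA | [u [y [ut uyt]]]]].
- apply: (N_eval_zero XN.1 (sat_S7_add_mono mt)).
  exact: N3_word_null (monomials_word_neq0 mt) nsm.
- case: (vars_witness t) => x xt.
  apply: (N_eval_zero (u := Mul (Var x) (Var x)) XN.1); last exact: (N_sqr_eq XN.1).
  move=> v7 /=; case vx: (v7 x); first by rewrite (eval_S7_inf xt vx).
  + case et: (eval v7 t) => //.
      by case/negP: (noA (fun n => v7 n == S7a)); rewrite -eval_chi_eqa -eval_S7_chi et.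
    by move/eqP/eval_S7_eq1P: et => /(_ x xt); rewrite vx.
  + case et: (eval v7 t) => //.
    by case/negP: (noA (fun n => v7 n == S7a)); rewrite -eval_chi_eqa -eval_S7_chi et.
- apply: (N_eval_zero (u := Mul (Var u) (Mul (Var y) (Var y))) XN.1); last first.
    by rewrite /= (N_sqr_mulr XN.1); apply: (N_sqr_eq XN.1).
  move=> v7 /=; rewrite eval_S7_monomials; set l := map _ _.
  have [-> | lfin] := eqVneq (s7_sum l) S7inf; first by rewrite s7_add_infl.
  have := s7_sum_mem lfin (map_f (s7_prod v7) ut).
  case: uyt => uyt; have := s7_sum_mem lfin (map_f (s7_prod v7) uyt).
  all: rewrite /= => Eu Euy; rewrite -Eu; move: Euy; rewrite -Eu.
  all: by case: (v7 u); case: (v7 y).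
Qed.

Lemma nonnull3_short t : ~ null3 t -> all short (monomials t).
Proof. by move=> tn; apply/negPn/negP => ts; apply: tn; left. Qed.

Lemma nonnull3_transversal t : ~ null3 t -> exists A, transversal A t.
Proof.
move=> tn; apply: NNPP => noA; apply: tn; right; left => A.
by apply/negP => At; apply: noA; exists A.
Qed.

Definition co_transversal (A : pred nat) (t : term) : pred nat :=
  fun x => ~~ A x || ([:: x] \in monomials t).

Lemma transversal_co A t : ~ null3 t -> transversal A t -> transversal (co_transversal A t) t.
Proof.
move=> tn /allP At; have /allP ts := nonnull3_short tn; apply/allP => m mt.
move: (At m mt) (ts m mt); case: m mt => [|x [|y [|]]] //= mt.
  by rewrite /co_transversal mt orbT; case: (A x).
move=> cA; rewrite /short /= andbT inE => xy.
have xt : [:: x] \notin monomials t.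
  by apply/negP => xt; apply: tn; right; right; exists x, y; split => //; left.
have yt : [:: y] \notin monomials t.
  by apply/negP => yt; apply: tn; right; right; exists y, x; split => //; right.
by move: cA; rewrite /co_transversal (negbTE xt) (negbTE yt) !orbF; case: (A x); case: (A y).
Qed.

Definition B3 : alg := WSub (fun _ : 'I_2 => 1%R) 2.

Definition full3 : B3 := wsub_of _ _ (Some setT).

Definition letters3 (A1 A2 : pred nat) (x : nat) : B3 :=
  wsub_of _ _ (Some [set c | if c == ord0 then A1 x else A2 x]).

Lemma admissible3 (W : {set 'I_2}) : W != set0 -> admissible (fun=> 1%R) 2 W.
Proof.
rewrite /admissible /wsum sumr_const -card_gt0 => W0.
by have := max_card W; rewrite card_ord; lia.
Qed.

Lemma full3_neq_inf : full3 <> wsub_inf _ _.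
Proof. by move/(congr1 val); rewrite val_wsub_of /= admissible3 //; apply/set0Pn; exists ord0. Qed.

Lemma eval_B3 A1 A2 t : (forall x, A1 x || A2 x) ->
  eval (letters3 A1 A2) t = full3 <-> transversal A1 t && transversal A2 t.
Proof.
move=> A12; rewrite (eval_WSub_sets ord0) => [|x]; last first.
  apply/admissible3/set0Pn; case/orP: (A12 x) => Ax; first by exists ord0; rewrite inE Ax.
  by exists (@Ordinal 2 1 isT); rewrite inE /= Ax.
rewrite /full3 (wsub_proj_full _ (admissible3 _)); last by apply/set0Pn; exists ord0.
have chiE (c : 'I_2) :
    eval (chi (fun n => c \in [set c | if c == ord0 then A1 n else A2 n]) : nat -> S7) t =
               eval (chi (if c == ord0 then A1 else A2) : nat -> S7) t.
  by apply: eq_in_eval_S7 => n _; rewrite /chi inE; case: (c == ord0).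
split => [ta | /andP [ta1 ta2] c]; last by apply/eqP; rewrite chiE eval_chi_eqa; case: (c == ord0).
by rewrite -!eval_chi_eqa; move: (ta ord0) (ta (@Ordinal 2 1 isT)); rewrite !chiE /= => -> ->.
Qed.

Lemma B3_in_N3 : in_Nk 3 B3.
Proof. exact: (WSub_in_Nk _ ord0). Qed.

Lemma B3_transversal s t A : ~ null3 s -> sat B3 s t -> transversal A s -> transversal A t.
Proof.
move=> sn st As; have A12 x : A x || co_transversal A s x by rewrite /co_transversal; case: (A x).
have full_s : eval (letters3 A (co_transversal A s)) s = full3.
  by apply/(eval_B3 s A12); rewrite As transversal_co.
by move: (st (letters3 A (co_transversal A s))); rewrite full_s => /esym /(eval_B3 t A12) /andP [].
Qed.

Lemma B3_generates_N3 (X : alg) : in_Nk 3 X -> in_V B3 X.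
Proof.
apply: (in_V_of_null_split (null := null3)) => [Y v t | | t tn | s t sn tn st].
- exact: N3_eval_null.
- exact: B3_in_N3.
- have [A At] := nonnull3_transversal tn.
  have A12 x : A x || co_transversal A t x by rewrite /co_transversal; case: (A x).
  exists (letters3 A (co_transversal A t)); rewrite (proj2 (eval_B3 t A12)).
    by rewrite [amul _ _]wsub_sqr; apply: full3_neq_inf.
  by rewrite At transversal_co.
apply: sat_S7_of_transversal; try exact: nonnull3_transversal.
- by apply: sub_all (nonnull3_short sn) => m /andP [].
- by apply: sub_all (nonnull3_short tn) => m /andP [].
move=> A; apply/idP/idP; first exact: B3_transversal.
by apply: B3_transversal => // w; rewrite st.
Qed.

(** * N_k is not finitely generated for k > 3 *)

Section PairSum.

Variable m : nat.

(* [x_i x_j y_ij], with the letter [y_ij] numbered [m + i m + j]. *)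
Definition pair_term (i j : nat) : term := Mul (Mul (Var i) (Var j)) (Var (m + i * m + j)).

Definition pairs : seq (nat * nat) :=
  [seq p <- [seq (i, j) | i <- iota 0 m, j <- iota 0 m] | p.1 < p.2].

(* The sum of all [x_i x_j y_ij] with [i < j < m]; the leading summand [x_0 x_1 y_01] only
   keeps the sum nonempty. *)
Definition pair_sum : term := foldr Add (pair_term 0 1) [seq pair_term p.1 p.2 | p <- pairs].

Lemma mem_pairs i j : i < j -> j < m -> (i, j) \in pairs.
Proof.
move=> ij jm; rewrite mem_filter /= ij /=.
by apply: (allpairs_f (fun i j => (i, j))); rewrite mem_iota /=; lia.
Qed.

Lemma pairs_lt p : p \in pairs -> p.1 < p.2 < m.
Proof.
rewrite mem_filter => /andP [-> /allpairsP [[i j] [_ jm ->]]].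
by move: jm; rewrite mem_iota.
Qed.

Lemma N_eval_pair_sum (A : alg) (v : nat -> A) i j : in_N A ->
  i < j -> j < m -> v i = v j -> eval v pair_sum = amul (v 0) (v 0).
Proof.
move=> AN ij jm vij; apply: (N_eval_foldr_Add _ AN (mem_pairs ij jm)).
by rewrite /= vij (N_sqr_mull AN); apply: (N_sqr_eq AN).
Qed.

Lemma eval_S7_pair_sum (v : nat -> S7) : 1 < m ->
  (forall i j, i < j < m -> eval v (pair_term i j) = S7a) -> eval v pair_sum = S7a.
Proof.
move=> m_gt1 pa; apply: eval_S7_foldr_Add => [|p /pairs_lt]; exact: pa.
Qed.

End PairSum.

Lemma pigeonhole (T : finType) (v : nat -> T) : exists i j, i < j < #|T|.+1 /\ v i = v j.
Proof.
have /injectivePn [i [j ij vij]] : ~~ injectiveb (fun i : 'I_#|T|.+1 => v i).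
  by apply/negP => /injectiveP inj; move: (leq_card _ inj); rewrite card_ord ltnn.
case: (ltngtP i j) => [lt | gt | /val_inj eq]; last by rewrite eq eqxx in ij.
- by exists i, j; rewrite lt ltn_ord.
- by exists j, i; rewrite gt ltn_ord.
Qed.

Section PairSumCounterexample.

Variables (m : nat) (K : int).
Hypotheses (m_gt1 : 1 < m) (K_ge3 : (Posz 3 <= K)%R).

(* Coordinate [0] carries the negative weight [3 - m], so that the whole index set,
   the value of [x_i x_j y_ij] below, has weight [3], while each generator has weight [1]. *)
Definition wpair (c : 'I_m.+1) : int := if c == ord0 then (Posz 3 - Posz m)%R else 1%R.

Definition slot (i : nat) : 'I_m.+1 := inord i.+1.

(* The valuation [x_i := {slot i}], [y_ij := all slots but [slot i] and [slot j]];
   the letters that are not of this form get the whole index set. *)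
Definition pair_sets (n : nat) : {set 'I_m.+1} :=
  if n < m then [set slot n]
  else if (n - m) %/ m < (n - m) %% m then setT :\ slot ((n - m) %/ m) :\ slot ((n - m) %% m)
  else setT.

Lemma slot_neq0 i : i < m -> slot i != ord0.
Proof. by move=> im; apply/eqP => /(congr1 val); rewrite /= inordK //; lia. Qed.

Lemma slot_eq i j : i < m -> j < m -> (slot i == slot j) = (i == j).
Proof. by move=> im jm; apply/eqP/eqP => [/(congr1 val) | -> //]; rewrite /= !inordK //; case. Qed.

Lemma wpair_slot i : i < m -> wpair (slot i) = 1%R.
Proof. by move=> im; rewrite /wpair (negbTE (slot_neq0 im)). Qed.

Lemma pair_sets_y i j : i < j -> j < m -> pair_sets (m + i * m + j) = setT :\ slot i :\ slot j.
Proof.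
move=> ij jm; rewrite /pair_sets ifF; last by lia.
have -> : m + i * m + j - m = i * m + j by lia.
by rewrite divnMDl ?divn_small ?modnMDl ?modn_small ?addn0 ?ij //; lia.
Qed.

Lemma wsum_pair_setT : wsum wpair setT = Posz 3.
Proof.
rewrite /wsum (eq_bigl predT) => [|c]; last by rewrite inE.
rewrite big_ord_recl /wpair eqxx (eq_bigr (fun _ => 1%R)) // sumr_const card_ord.
by rewrite natz; lia.
Qed.

Lemma wsum_pair_co i j : i < j -> j < m -> wsum wpair (setT :\ slot i :\ slot j) = 1%R.
Proof.
move=> ij jm; have im : i < m by lia.
have := @wsumD1 _ wpair setT (slot i); rewrite in_setT wsum_pair_setT wpair_slot // => /(_ isT).
have := @wsumD1 _ wpair (setT :\ slot i) (slot j); rewrite wpair_slot // !inE slot_eq //.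
by rewrite eq_sym (ltn_eqF ij) => /(_ isT); lia.
Qed.

Lemma admissible_pair_sets n : admissible wpair K (pair_sets n).
Proof.
rewrite /admissible /pair_sets; case: ifP => [nm | _].
  by rewrite /wsum big_set1 wpair_slot //; lia.
case: ifP => [ij | _]; last by rewrite wsum_pair_setT; lia.
have jm : (n - m) %% m < m by rewrite ltn_mod; lia.
by rewrite wsum_pair_co //; lia.
Qed.

Lemma chi_pair_term (c : 'I_m.+1) i j : i < j < m ->
  eval (chi (fun n => c \in pair_sets n) : nat -> S7) (pair_term m i j) = S7a.
Proof.
case/andP=> ij jm; have im : i < m by lia.
rewrite /= /chi pair_sets_y // /pair_sets im jm !inE.
have nij : (slot i == slot j) = false by rewrite slot_eq // ltn_eqF.
case ci: (c == slot i); case cj: (c == slot j) => //=.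
by move: nij; rewrite -(eqP ci) -(eqP cj) eqxx.
Qed.

Lemma WSub_pair_sum_nonzero :
  ~ sat (WSub wpair K) (pair_sum m) (Mul (Var 0) (Var 0)).
Proof.
move=> /(_ (fun n => wsub_of wpair K (Some (pair_sets n)))).
rewrite (eval_WSub_sets ord0) => [|n]; last exact: admissible_pair_sets.
rewrite [eval _ (Mul _ _)]wsub_sqr (proj2 (wsub_proj_full _ _)) => [| | c].
- by move/(congr1 val); rewrite val_wsub_of /= /admissible wsum_pair_setT; case: ifP => //; lia.
- by rewrite /admissible wsum_pair_setT; lia.
by apply: eval_S7_pair_sum => // i j; apply: chi_pair_term.
Qed.

End PairSumCounterexample.

Lemma not_fin_generated_Nk k : 3 < k -> ~ fin_generated (in_Nk k).
Proof.
move=> k_gt3 [T [ad [mu BV]]]; pose m := #|T|.+2.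
have BN : in_Nk k (Alg ad mu) by apply: (proj2 (BV _)) => s t.
have WN : in_Nk k (WSub (@wpair m) (Posz k.-1)) by apply: (WSub_in_Nk _ ord0); lia.
apply: (@WSub_pair_sum_nonzero m (Posz k.-1)); [lia | lia |].
apply: ((BV _).1 WN) => v; have [i [j [/andP [ij jT] vij]]] := pigeonhole v.
by apply: (N_eval_pair_sum BN.1 ij) => //; rewrite /m; lia.
Qed.

Theorem corollary4p14 (k : nat) : 1 <= k -> (fin_generated (in_Nk k) <-> k <= 3).
Proof.
move=> k_gt0; split => [fg | k_le3].
  by rewrite leqNgt; apply/negP => /not_fin_generated_Nk.
case: k k_gt0 k_le3 => [|[|[|[|]]]] // _ _.
- exact: fin_generated_Nk B1_in_N1 B1_generates_N1.
- exact: fin_generated_Nk B2_in_N2 B2_generates_N2.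
- exact: fin_generated_Nk B3_in_N3 B3_generates_N3.
Qed.
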